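(* For each $k\in\mathbb N$, the ordinal $\omega^{\omega^k}$ (as the linear ordering $(\omega^{\omega^k};\le)$) admits a tree-automatic presentation over a unary alphabet $\Sigma$, i.e. with all universe trees being $\Sigma$-trees for some one-letter alphabet $\Sigma$.
   Context: A $\Sigma$-tree is a map $t:D\to\Sigma$ where $D$ is a finite prefix-closed subset of $\{0,1\}^*$. A tree automaton is deterministic bottom-up: $(Q,\iota,\delta:\Sigma\times Q\times Q\to Q,F)$, with missing children assigned state $\iota$ and acceptance determined by the root state. The convolution of trees $t_1,\dots,t_n$ is the tree on $\bigcup_i\mathrm{dom}(t_i)$ labelled by tuples, padding with a fresh symbol $\Box$ where a $t_i$ is undefined. A tree-automatic presentation of a structure $(A;\le)$ consists of tree automata $\mathcal A$, $\mathcal A_\le$ and a bijection $\mu:A\to L(\mathcal A)$ such that $\mathcal A_\le$ accepts exactly the convolutions $\otimes(\mu(a),\mu(b))$ with $a\le b$. *)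

From mathcomp Require Import all_boot.
Set Implicit Arguments. Unset Strict Implicit. Unset Printing Implicit Defensive.

(* ---------- Finite labelled binary trees ----------
   A Sigma-tree t : D -> Sigma, D a finite prefix-closed subset of {0,1}^*,
   is represented canonically: [Leaf] is the tree with empty domain, and
   [Node a l r] has root (epsilon) labelled a, with 0-subtree l, 1-subtree r. *)
Inductive tree (S : Type) : Type :=
| Leaf : tree S
| Node : S -> tree S -> tree S -> tree S.
Arguments Leaf {S}.

Record automaton (S : Type) := Automaton {
  aQ : finType;
  aiota : aQ;
  adelta : S -> aQ -> aQ -> aQ;
  aF : pred aQ }.

(* run: missing children receive state iota *)
Fixpoint run S (A : automaton S) (t : tree S) : @aQ S A :=
  match t with
  | Leaf => @aiota S A
  | Node a l r => @adelta S A a (run A l) (run A r)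
  end.

Definition accepts S (A : automaton S) (t : tree S) : bool := @aF S A (run A t).

(* Convolution of two trees, padding symbol Box represented by None. *)
Fixpoint pad1 S1 S2 (t : tree S1) : tree (option S1 * option S2) :=
  match t with
  | Leaf => Leaf
  | Node a l r => Node (Some a, None) (pad1 S2 l) (pad1 S2 r)
  end.
Fixpoint pad2 S1 S2 (t : tree S2) : tree (option S1 * option S2) :=
  match t with
  | Leaf => Leaf
  | Node b l r => Node (None, Some b) (pad2 S1 l) (pad2 S1 r)
  end.
Fixpoint conv S1 S2 (t1 : tree S1) (t2 : tree S2) : tree (option S1 * option S2) :=
  match t1, t2 with
  | Leaf, _ => pad2 S1 t2
  | Node a l r, Leaf => pad1 S2 t1
  | Node a l r, Node b l' r' => Node (Some a, Some b) (conv l l') (conv r r')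
  end.

(* ---------- Ordinals below epsilon_0 in Cantor normal form ----------
   [Zero] = 0 ;  [Cons a n b] = omega^a * (n+1) + b. *)
Inductive cnf : Type :=
| Zero : cnf
| Cons : cnf -> nat -> cnf -> cnf.

Fixpoint cmp (x y : cnf) : comparison :=
  match x, y with
  | Zero, Zero => Eq
  | Zero, Cons _ _ _ => Lt
  | Cons _ _ _, Zero => Gt
  | Cons a n b, Cons a' n' b' =>
      match cmp a a' with
      | Lt => Lt
      | Gt => Gt
      | Eq => match Nat.compare n n' with
              | Lt => Lt
              | Gt => Gt
              | Eq => cmp b b'
              end
      end
  end.

Definition ltb (x y : cnf) : bool := if cmp x y is Lt then true else false.

Fixpoint nf (x : cnf) : bool :=
  match x with
  | Zero => true
  | Cons a n b =>
      nf a && nf b &&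
      (match b with Zero => true | Cons a' _ _ => ltb a' a end)
  end.

Definition ofnat (k : nat) : cnf :=
  match k with 0 => Zero | S m => Cons Zero m Zero end.

Definition omega_pow (x : cnf) : cnf := Cons x 0 Zero.

Definition omega_omega_k (k : nat) : cnf := omega_pow (omega_pow (ofnat k)).

Definition ord_below (alpha : cnf) : Type := {x : cnf | nf x && ltb x alpha}.

Definition ord_le (alpha : cnf) (x y : ord_below alpha) : Prop :=
  cmp (proj1_sig x) (proj1_sig y) <> Gt.

Definition tree_automatic_presentation (S : finType) (A : Type) (le : A -> A -> Prop) : Prop :=
  exists (AU : automaton S) (ALE : automaton (option S * option S)) (mu : A -> tree S),
    [/\ injective mu,
        (forall a, accepts AU (mu a)),
        (forall t, accepts AU t -> exists a, mu a = t) &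
        (forall a b, accepts ALE (conv (mu a) (mu b)) <-> le a b)].

(* A tree over a one-letter alphabet is just a shape.  A code of level 0 is a
   right spine of length n and stands for n.  A code of level j+1 is a right
   spine whose i-th node carries as left subtree a code of level j of some
   b_i < ω^(ω^j); it stands for the sum of the ω^(ω^j * i) * b_i, the terms of
   larger i coming first in Cantor normal form.  Requiring the topmost left
   subtree to be nonempty makes this a bijection onto ω^(ω^(j+1)).  As the
   blocks for different i occupy disjoint ranges of exponents, the ordinal
   order becomes the lexicographic order on trees comparing right subtrees
   first and left subtrees second.  A three-state automaton computes this
   comparison bottom-up on convolutions, and the codes of level k are
   recognised by remembering, for every level up to k, whether the subtree
   read so far is a code of that level. *)

From Stdlib Require Import PeanoNat ClassicalEpsilon.
From mathcomp Require Import all_boot.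
Set Implicit Arguments. Unset Strict Implicit. Unset Printing Implicit Defensive.

Lemma sub_all2 (T : Type) (a b c : pred T) (s : seq T) :
  (forall x, a x -> b x -> c x) -> all a s -> all b s -> all c s.
Proof.
move=> abc ha hb; have : all (predI a b) s by rewrite all_predI ha hb.
by apply: sub_all => x /andP[]; apply: abc.
Qed.

Lemma seq_ubound (T : Type) (f : T -> nat) (s : seq T) :
  exists n, all (fun e => f e < n) s.
Proof.
elim: s => [|a s [n hn]]; first by exists 0.
exists (maxn (f a).+1 n); rewrite /= leq_max leqnn.
by apply: sub_all hn => e h; rewrite leq_max h orbT.
Qed.

(** * Comparison of Cantor normal forms *)

Lemma compare_ltP m n : reflect (Nat.compare m n = Lt) (m < n).
Proof. by apply: (iffP ltP); rewrite Nat.compare_lt_iff. Qed.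

Lemma cmp_refl x : cmp x x = Eq.
Proof. by elim: x => //= a -> n b ->; rewrite Nat.compare_refl. Qed.

Lemma cmp_eq x y : cmp x y = Eq -> x = y.
Proof.
elim: x y => [|a IHa n b IHb] [|a' n' b'] //=.
case: (cmp a a') (IHa a') => // -> //.
by case: (Nat.compare n n') (Nat.compare_eq n n') => // -> // /IHb ->.
Qed.

Lemma cmp_opp x y : cmp y x = CompOpp (cmp x y).
Proof.
elim: x y => [|a IHa n b IHb] [|a' n' b'] //=.
rewrite IHa Nat.compare_antisym IHb.
by case: (cmp a a'); case: (Nat.compare n n').
Qed.

Lemma cmp_lt_trans x y z : cmp x y = Lt -> cmp y z = Lt -> cmp x z = Lt.
Proof.
elim: x y z => [|a IHa n b IHb] [|a' n' b'] [|a'' n'' b''] //=.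
case E1: (cmp a a') => //; case E2: (cmp a' a'') => //.
- move: E1 E2 => /cmp_eq -> /cmp_eq ->; rewrite cmp_refl.
  case N1: (Nat.compare n n') => //; case N2: (Nat.compare n' n'') => //.
  + move: N1 N2 => /Nat.compare_eq -> /Nat.compare_eq ->.
    rewrite Nat.compare_refl; exact: IHb.
  + by move: N1 => /Nat.compare_eq ->; rewrite N2.
  + by move: N2 => /Nat.compare_eq <-; rewrite N1.
  + move: N1 N2 => /compare_ltP N1 /compare_ltP N2 _ _.
    by have /compare_ltP -> := ltn_trans N1 N2.
- by move: E1 => /cmp_eq ->; rewrite E2.
- by move: E2 => /cmp_eq <-; rewrite E1.
- by rewrite (IHa _ _ E1 E2).
Qed.

Lemma ltbP x y : reflect (cmp x y = Lt) (ltb x y).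
Proof. by rewrite /ltb; case: (cmp x y); constructor. Qed.

Definition gtb x y := ltb y x.

Lemma gtb_trans : transitive gtb.
Proof. move=> y x z /ltbP yx /ltbP zy; apply/ltbP; exact: cmp_lt_trans zy yx. Qed.

Lemma cmp_ofnat m n : cmp (ofnat m) (ofnat n) = Nat.compare m n.
Proof. by case: m n => [|m] [|n] //=; case: (Nat.compare m n). Qed.

Lemma nf_ofnat n : nf (ofnat n).
Proof. by case: n. Qed.

Lemma gtb_ofnatS j : gtb (ofnat j.+1) (ofnat j).
Proof. by apply/ltbP; rewrite cmp_ofnat; apply/compare_ltP. Qed.

(** * Normal forms as sequences of exponents *)

Fixpoint exps (x : cnf) : seq cnf := if x is Cons a _ b then a :: exps b else [::].

Fixpoint cnf_cat (x y : cnf) : cnf :=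
  if x is Cons a n b then Cons a n (cnf_cat b y) else y.

Fixpoint map_exp (f : cnf -> cnf) (x : cnf) : cnf :=
  if x is Cons a n b then Cons (f a) n (map_exp f b) else Zero.

Lemma cnf_cat_eq0 x y : cnf_cat x y = Zero -> x = Zero /\ y = Zero.
Proof. by case: x. Qed.

Lemma map_exp_eq0 f x : map_exp f x = Zero -> x = Zero.
Proof. by case: x. Qed.

Lemma exps_cat x y : exps (cnf_cat x y) = exps x ++ exps y.
Proof. by elim: x => //= a _ n b ->. Qed.

Lemma exps_map f x : exps (map_exp f x) = map f (exps x).
Proof. by elim: x => //= a _ n b ->. Qed.

Lemma exps_nil x : exps x = [::] -> x = Zero.
Proof. by case: x. Qed.

Lemma nfE x : nf x = all nf (exps x) && pairwise gtb (exps x).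
Proof.
rewrite -sorted_pairwise; last exact: gtb_trans.
elim: x => //= a _ n b ->; case: b => [|a' n' b'] /=; first by rewrite !andbT.
by rewrite !andbA andbAC.
Qed.

Lemma cmp_cat x x' y y' : allrel gtb (exps x ++ exps x') (exps y ++ exps y') ->
  cmp (cnf_cat x y) (cnf_cat x' y') = if cmp x x' is Eq then cmp y y' else cmp x x'.
Proof.
elim: x x' => [|a _ n b IH] [|a' n' b'] //=.
- by case: y => //= c m d; rewrite allrel_consl => /andP[/andP[/ltbP -> _] _].
- clear IH; case: y' => //= c m d.
  rewrite allrel_consl all_cat => /andP[/andP[_ /andP[/ltbP lt _]] _].
  by rewrite cmp_opp lt.
- rewrite allrel_consl allrel_catl allrel_consl => /and3P[_ hb /andP[_ hb']].
  rewrite IH ?allrel_catl ?hb ?hb' //.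
  by case: (cmp a a') => //; case: (Nat.compare n n').
Qed.

Lemma cmp_map_exp f x y : (forall a b, cmp (f a) (f b) = cmp a b) ->
  cmp (map_exp f x) (map_exp f y) = cmp x y.
Proof. by move=> fE; elim: x y => [|a _ n b IH] [|a' n' b'] //=; rewrite fE IH. Qed.

Definition below_omega (j : nat) (e : cnf) : bool := nf e && ltb e (omega_pow (ofnat j)).

Definition below_omega_omega (j : nat) (x : cnf) : bool := nf x && ltb x (omega_omega_k j).

Lemma ltb_omega_pow_lead a n b c : ltb (Cons a n b) (omega_pow c) -> cmp a c = Lt.
Proof. by rewrite /ltb /=; case: (cmp a c) => //; case: n => //=; case: b. Qed.

Lemma ltb_omega_powE c x : nf x -> ltb x (omega_pow c) = all (gtb c) (exps x).
Proof.
case: x => // a n b; rewrite nfE => /andP[_ /andP[ab _]].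
apply/idP/idP => [/ltb_omega_pow_lead /ltbP ca | /andP[/ltbP ac _]].
  by apply/andP; split; last by apply: sub_all ab => e; exact: gtb_trans ca.
by rewrite /ltb /= ac.
Qed.

Lemma below_omega_omegaE j x :
  below_omega_omega j x = pairwise gtb (exps x) && all (below_omega j) (exps x).
Proof.
rewrite /below_omega_omega.
rewrite -[all (below_omega j) _]/(all (predI nf (gtb (omega_pow (ofnat j)))) _).
rewrite all_predI; case nx: (nf x).
  by rewrite ltb_omega_powE //; move: nx; rewrite nfE => /andP[-> ->].
by move: nx; rewrite nfE; case: (all nf _); case: (pairwise _ _).
Qed.

Lemma below_omega0 e : below_omega 0 e -> e = Zero.
Proof. by case: e => // a n b /andP[_ /ltb_omega_pow_lead]; case: a. Qed.

Lemma below_omega_omega0 x : below_omega_omega 0 x -> exists n, x = ofnat n.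
Proof.
rewrite below_omega_omegaE; case: x => [|a n b]; first by exists 0.
move=> /= /andP[/andP[ab _] /andP[/below_omega0 a0 bb]]; subst a.
case: b ab bb => [_ _|a' n' b'] /=; first by exists n.+1.
by move=> /andP[lt _] /andP[/below_omega0 a'0 _]; rewrite a'0 in lt.
Qed.

Lemma nf_lt_ofnat a n : nf a -> cmp a (ofnat n) = Lt -> exists2 m, m < n & a = ofnat m.
Proof.
move=> na lt; have [m am] : exists m, a = ofnat m.
  apply: below_omega_omega0; rewrite /below_omega_omega na.
  by apply/ltbP; apply: cmp_lt_trans lt _; case: n.
by exists m; move: lt; rewrite am cmp_ofnat => /compare_ltP.
Qed.

(* [shift j i r] is the exponent ω^j * i + r; [digit j] and [unshift j] read
   off i and r from an exponent below ω^(j+1). *)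
Definition shift (j i : nat) (r : cnf) : cnf :=
  if i is i'.+1 then Cons (ofnat j) i' r else r.

Definition digit (j : nat) (e : cnf) : nat :=
  if e is Cons a m _ then (if cmp a (ofnat j) is Eq then m.+1 else 0) else 0.

Definition unshift (j : nat) (e : cnf) : cnf :=
  if e is Cons a _ r then (if cmp a (ofnat j) is Eq then r else e) else e.

Lemma cmp_shift j i r r' : cmp (shift j i r) (shift j i r') = cmp r r'.
Proof. by case: i => //= i; rewrite cmp_refl Nat.compare_refl. Qed.

Lemma cmp_shift_lt j i i' r r' : ltb r (omega_pow (ofnat j)) -> i < i' ->
  cmp (shift j i r) (shift j i' r') = Lt.
Proof.
case: i' => // i'; case: i => [|i]; rewrite /shift.
  by case: r => // a m b /ltb_omega_pow_lead lt _; rewrite /cmp -/cmp lt.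
by rewrite /cmp -/cmp cmp_refl ltnS => _ /compare_ltP ->.
Qed.

Lemma digit_shift j i r : ltb r (omega_pow (ofnat j)) -> digit j (shift j i r) = i.
Proof.
case: i => [|i]; rewrite /shift /digit; last by rewrite cmp_refl.
by case: r => // a m b /ltb_omega_pow_lead ->.
Qed.

Lemma below_omegaE j e : below_omega j e = nf e && all (gtb (ofnat j)) (exps e).
Proof. by rewrite /below_omega; case ne: (nf e) => //=; rewrite ltb_omega_powE. Qed.

Lemma below_omegaS j e : below_omega j e -> below_omega j.+1 e.
Proof.
rewrite !below_omegaE => /andP[-> /= lr].
by apply: sub_all lr => e'; apply: gtb_trans (gtb_ofnatS j).
Qed.

Lemma below_omega_shift j i r : below_omega j r -> below_omega j.+1 (shift j i r).
Proof.
case: i => [|i] br; first exact: below_omegaS.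
have := below_omegaS br; rewrite below_omegaE => /andP[_ lr'].
move: br; rewrite !below_omegaE /shift !nfE /= nf_ofnat gtb_ofnatS lr'.
by move=> /andP[/andP[-> ->] ->].
Qed.

Lemma digit_decomposition j e : below_omega j.+1 e ->
  shift j (digit j e) (unshift j e) = e /\ below_omega j (unshift j e).
Proof.
case: e => [|a m r]; first by [].
move=> /andP[ne /ltb_omega_pow_lead lt].
have /= /andP[/andP[na nr] _] := ne.
have [j' + aE] := nf_lt_ofnat na lt; subst a.
rewrite ltnS leq_eqVlt => /orP[/eqP j'E|lt_j'j]; first subst j'.
  rewrite /digit /unshift cmp_refl; split=> //.
  by rewrite below_omegaE nr; move: ne; rewrite nfE => /andP[_ /andP[]].
have /compare_ltP lt' := lt_j'j; rewrite /digit /unshift cmp_ofnat lt'.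
by split=> //; rewrite /below_omega ne /ltb /= cmp_ofnat lt'.
Qed.

Lemma digit_ltb j e e' : below_omega j.+1 e -> below_omega j.+1 e' ->
  digit j e < digit j e' -> ltb e e'.
Proof.
move=> /digit_decomposition [eE /andP[_ lr]] /digit_decomposition [e'E _] lt.
by apply/ltbP; rewrite -eE -e'E; apply: cmp_shift_lt.
Qed.

Lemma digit_le j e e' : below_omega j.+1 e -> below_omega j.+1 e' ->
  ltb e e' -> digit j e <= digit j e'.
Proof.
move=> be be' /ltbP lt; rewrite leqNgt; apply/negP => /(digit_ltb be' be) /ltbP.
by rewrite cmp_opp lt.
Qed.

Lemma cmp_unshift j e e' : below_omega j.+1 e -> below_omega j.+1 e' ->
  digit j e = digit j e' -> cmp (unshift j e) (unshift j e') = cmp e e'.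
Proof.
move=> /digit_decomposition [eE _] /digit_decomposition [e'E _] de.
by rewrite -{2}eE -{2}e'E de cmp_shift.
Qed.

Lemma allrel_gtb_digit (j i : nat) s s' :
  all (fun e => below_omega j.+1 e && (i < digit j e)) s ->
  all (fun e => below_omega j.+1 e && (digit j e == i)) s' -> allrel gtb s s'.
Proof.
move=> hs hs'; apply: sub_all hs => e /andP[be ie].
by apply: sub_all hs' => e' /andP[be' /eqP ie']; apply: digit_ltb be' be _; rewrite ie'.
Qed.

Lemma split_digit j i x : pairwise gtb (exps x) -> all (below_omega j.+1) (exps x) ->
  exists hi lo, [/\ x = cnf_cat hi lo, all (fun e => i < digit j e) (exps hi)
                  & all (fun e => digit j e <= i) (exps lo)].
Proof.
elim: x => [|a _ n b IH]; first by exists Zero, Zero.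
move=> /= /andP[ab pb] /andP[ba bb]; case: (ltnP i (digit j a)) => [ia|ai].
  by have [hi [lo [-> hh hl]]] := IH pb bb; exists (Cons a n hi), lo; rewrite /= ia.
exists Zero, (Cons a n b); split=> //=; rewrite ai.
by apply: sub_all2 ab bb => e ae be; apply: leq_trans (digit_le be ba ae) ai.
Qed.

Lemma shift_unshift_map (j i : nat) x :
  all (fun e => below_omega j.+1 e && (digit j e == i)) (exps x) ->
  map_exp (shift j i) (map_exp (unshift j) x) = x.
Proof.
elim: x => //= a _ n b IH /andP[/andP[ba /eqP ai] hb].
by rewrite IH // -ai (digit_decomposition ba).1.
Qed.

(** * Codes *)

Definition is_leaf (t : tree unit) : bool := if t is Leaf then true else false.

Fixpoint is_code (j : nat) (t : tree unit) {struct t} : bool :=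
  match t with
  | Leaf => true
  | Node _ l r => is_code j r &&
      (if j is j'.+1 then is_code j' l && (is_leaf r ==> ~~ is_leaf l) else is_leaf l)
  end.

Fixpoint spine_len (t : tree unit) : nat := if t is Node _ _ r then (spine_len r).+1 else 0.

(* The node at height i of the spine contributes ω^(ω^j * i) * dec l. *)
Fixpoint decode_spine (dec : tree unit -> cnf) (j i : nat) (t : tree unit) : cnf :=
  if t is Node _ l r then cnf_cat (decode_spine dec j i.+1 r) (map_exp (shift j i) (dec l))
  else Zero.

Fixpoint decode (j : nat) (t : tree unit) : cnf :=
  if j is j'.+1 then decode_spine (decode j') j' 0 t else ofnat (spine_len t).

Fixpoint tree_cmp (s t : tree unit) : comparison :=
  match s, t with
  | Leaf, Leaf => Eq
  | Leaf, Node _ _ _ => Lt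
  | Node _ _ _, Leaf => Gt
  | Node _ l r, Node _ l' r' => if tree_cmp r r' is Eq then tree_cmp l l' else tree_cmp r r'
  end.

Lemma tree_cmp_eq s t : tree_cmp s t = Eq -> s = t.
Proof.
elim: s t => [|[] l IHl r IHr] [|[] l' r'] //=.
by case E: (tree_cmp r r') => // /IHl ->; rewrite (IHr _ E).
Qed.

Section DecodeSpine.
Variables (j : nat) (dec : tree unit -> cnf).

Hypothesis dec_below : forall g, is_code j g -> below_omega_omega j (dec g).

Lemma exps_shift_dec (i : nat) g : is_code j g ->
  all (fun e => below_omega j.+1 e && (digit j e == i)) (exps (map_exp (shift j i) (dec g))).
Proof.
move=> /dec_below; rewrite below_omega_omegaE exps_map all_map => /andP[_].
apply: sub_all => e be /=; have /andP[_ lr] := be.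
by rewrite below_omega_shift // digit_shift // eqxx.
Qed.

Lemma decode_spine_digits i t : is_code j.+1 t ->
  all (fun e => below_omega j.+1 e && (i <= digit j e)) (exps (decode_spine dec j i t)).
Proof.
elim: t i => [|u l _ r IH] i //= /andP[cr /andP[cl _]].
rewrite exps_cat all_cat; apply/andP; split.
  by apply: sub_all (IH _ cr) => e /andP[-> /ltnW].
by apply: sub_all (exps_shift_dec i cl) => e /andP[-> /eqP ->] /=.
Qed.

Lemma below_omega_omega_decode_spine i t : is_code j.+1 t ->
  below_omega_omega j.+1 (decode_spine dec j i t).
Proof.
move=> ct; rewrite below_omega_omegaE; apply/andP; split; last first.
  by apply: sub_all (decode_spine_digits i ct) => e /andP[].
elim: t i ct => [|u l _ r IH] i //= /andP[cr /andP[cl _]].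
rewrite exps_cat pairwise_cat IH //=; apply/andP; split.
  exact: allrel_gtb_digit (decode_spine_digits i.+1 cr) (exps_shift_dec i cl).
have := dec_below cl; rewrite below_omega_omegaE => /andP[pl _].
rewrite exps_map pairwise_map; apply: sub_pairwise pl.
by move=> a b; rewrite /= /gtb /ltb cmp_shift.
Qed.

Hypothesis dec_eq0 : forall g, is_code j g -> dec g = Zero -> g = Leaf.

Lemma decode_spine_eq0 i t : is_code j.+1 t -> decode_spine dec j i t = Zero -> t = Leaf.
Proof.
elim: t i => [|u l _ r IH] i //= /andP[cr /andP[cl nonempty]].
move=> /cnf_cat_eq0 [/(IH _ cr) rE /map_exp_eq0 /(dec_eq0 cl) lE].
by rewrite rE lE in nonempty.
Qed.

Hypothesis cmp_dec : forall s t, is_code j s -> is_code j t -> cmp (dec s) (dec t) = tree_cmp s t.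

Lemma cmp_decode_spine i s t : is_code j.+1 s -> is_code j.+1 t ->
  cmp (decode_spine dec j i s) (decode_spine dec j i t) = tree_cmp s t.
Proof.
elim: s t i => [|u l _ r IH] [|u' l' r'] i cs ct //.
- by case E: (decode_spine dec j i (Node _ _ _)) => //; have := decode_spine_eq0 ct E.
- by case E: (decode_spine dec j i (Node _ _ _)) => //; have := decode_spine_eq0 cs E.
move: cs ct => /= /andP[cr /andP[cl _]] /andP[cr' /andP[cl' _]].
rewrite cmp_cat; last first.
  apply: (allrel_gtb_digit (i := i)); rewrite all_cat.
    by apply/andP; split; apply: decode_spine_digits.
  by rewrite !exps_shift_dec.
by rewrite IH // cmp_map_exp ?cmp_dec // => a b; apply: cmp_shift.
Qed.
End DecodeSpine.

Section DecodeSpineSurj.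
Variables (j : nat) (dec : tree unit -> cnf).
Hypothesis dec_Leaf : dec Leaf = Zero.
Hypothesis dec_surj : forall x, below_omega_omega j x -> exists2 g, is_code j g & dec g = x.

Lemma decode_spine_surj n i x : pairwise gtb (exps x) ->
  all (fun e => below_omega j.+1 e && (i <= digit j e < i + n)) (exps x) ->
  exists2 t, is_code j.+1 t & decode_spine dec j i t = x.
Proof.
elim: n i x => [|n IHn] i x px hx.
  exists Leaf => //; apply/esym/exps_nil; case: (exps x) hx => // e s /andP[+ _].
  by rewrite addn0 => /and3P[_ le]; rewrite ltnNge le.
have bx : all (below_omega j.+1) (exps x) by apply: sub_all hx => e /andP[].
have [hi [lo [xE hh hl]]] := split_digit i px bx.
move: px hx; rewrite xE exps_cat pairwise_cat all_cat => /and3P[_ phi plo] /andP[hhi hlo].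
have [tr ctr trE] : exists2 tr, is_code j.+1 tr & decode_spine dec j i.+1 tr = hi.
  apply: IHn phi _; rewrite addSnnS.
  by apply: sub_all2 hh hhi => e -> /and3P[-> _ ->].
have lo_i : all (fun e => below_omega j.+1 e && (digit j e == i)) (exps lo).
  by apply: sub_all2 hl hlo => e ei /and3P[-> ie _]; rewrite eqn_leq ei ie.
have [g cg gE] : exists2 g, is_code j g & dec g = map_exp (unshift j) lo.
  apply: dec_surj; rewrite below_omega_omegaE exps_map pairwise_map all_map.
  apply/andP; split.
    apply: (@sub_in_pairwise _ _ gtb _ _ _ lo_i plo) => e e'.
    move=> /andP[be /eqP ei] /andP[be' /eqP e'i].
    by rewrite /= /gtb /ltb cmp_unshift // ei e'i.
  by apply: sub_all lo_i => e /andP[/digit_decomposition []].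
have [leaves|node] := boolP (is_leaf tr && is_leaf g).
  exists Leaf => //; case/andP: leaves.
  case: tr ctr trE => // _ <- _; case: g cg gE => // _ + _.
  by rewrite dec_Leaf => /esym /map_exp_eq0 ->.
exists (Node tt g tr); first by rewrite /= ctr cg implybE -negb_and.
by rewrite /= trE gE shift_unshift_map.
Qed.
End DecodeSpineSurj.

Fixpoint spine (n : nat) : tree unit := if n is m.+1 then Node tt Leaf (spine m) else Leaf.

Lemma is_code_spine n : is_code 0 (spine n).
Proof. by elim: n => //= n ->. Qed.

Lemma spine_lenK n : spine_len (spine n) = n.
Proof. by elim: n => //= n ->. Qed.

Lemma compare_spine_len s t : is_code 0 s -> is_code 0 t ->
  Nat.compare (spine_len s) (spine_len t) = tree_cmp s t.
Proof.
elim: s t => [|u l _ r IH] [|u' l' r'] //= /andP[cr ll] /andP[cr' ll'].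
by rewrite IH //; case: l ll; case: l' ll'; case: (tree_cmp r r').
Qed.

Lemma decode_Leaf j : decode j Leaf = Zero.
Proof. by case: j. Qed.

Lemma below_omega_omega_decode j t : is_code j t -> below_omega_omega j (decode j t).
Proof.
elim: j t => [|j IH] t ct; last exact: below_omega_omega_decode_spine.
by rewrite /below_omega_omega /= nf_ofnat; case: (spine_len t).
Qed.

Lemma decode_eq0 j t : is_code j t -> decode j t = Zero -> t = Leaf.
Proof.
elim: j t => [|j IH] t ct; last exact: decode_spine_eq0.
by case: t ct.
Qed.

Lemma cmp_decode j s t : is_code j s -> is_code j t ->
  cmp (decode j s) (decode j t) = tree_cmp s t.
Proof.
elim: j s t => [|j IH] s t cs ct; last first.
  exact: cmp_decode_spine (@below_omega_omega_decode j) (@decode_eq0 j) IH 0 s t cs ct.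
by rewrite /= cmp_ofnat compare_spine_len.
Qed.

Lemma decode_surj j x : below_omega_omega j x -> exists2 t, is_code j t & decode j t = x.
Proof.
elim: j x => [|j IH] x.
  by move=> /below_omega_omega0 [n ->]; exists (spine n); rewrite ?is_code_spine //= spine_lenK.
rewrite below_omega_omegaE => /andP[px bx].
have [n hn] := seq_ubound (digit j) (exps x).
apply: (decode_spine_surj (decode_Leaf j) IH (n := n) (i := 0) px).
by apply: sub_all2 bx hn => e -> /= ->.
Qed.

(** * Automata *)

Definition state_of_cmp (c : comparison) : option bool :=
  match c with Eq => None | Lt => Some false | Gt => Some true end.

Definition cmp_automaton : automaton (option unit * option unit) :=
  @Automaton _ (option bool) None
    (fun lab l r => match lab with
                    | (Some _, Some _) => if r is None then l else r
                    | (Some _, None) => Some true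
                    | (None, _) => Some false
                    end)
    (fun q => q != Some true).

Lemma run_cmp_automaton s t : run cmp_automaton (conv s t) = state_of_cmp (tree_cmp s t).
Proof.
elim: s t => [|u l IHl r IHr] [|u' l' r'] //=.
by rewrite IHl IHr; case: (tree_cmp r r').
Qed.

Lemma accepts_cmp_automaton s t :
  accepts cmp_automaton (conv s t) <-> tree_cmp s t <> Gt.
Proof. by rewrite /accepts run_cmp_automaton; case: (tree_cmp s t). Qed.

Section CodeAutomaton.
Variable k : nat.

Definition level_bit (f : {ffun 'I_k.+1 -> bool}) (n : nat) : bool := (n < k.+1) && f (inord n).

Lemma level_bit_ffun (P : nat -> bool) n :
  n < k.+1 -> level_bit [ffun i : 'I_k.+1 => P i] n = P n.
Proof. by move=> lt_nk; rewrite /level_bit lt_nk ffunE inordK. Qed.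

(* A state records whether the tree is a leaf and, for each level n <= k,
   whether it is a code of level n. *)
Definition code_automaton : automaton unit :=
  @Automaton _ (bool * {ffun 'I_k.+1 -> bool})%type (true, [ffun _ => true])
    (fun _ L R => (false, [ffun i : 'I_k.+1 => level_bit R.2 i &&
        (if (i : nat) is i'.+1 then level_bit L.2 i' && (R.1 ==> ~~ L.1) else L.1)]))
    (fun q => q.2 ord_max).

Lemma run_code_automaton t :
  run code_automaton t = (is_leaf t, [ffun i : 'I_k.+1 => is_code i t]).
Proof.
elim: t => [|u l IHl r IHr] /=; first by congr pair; apply/ffunP => i; rewrite !ffunE.
rewrite IHl IHr /=; congr pair; apply/ffunP => i; rewrite !ffunE.
rewrite (level_bit_ffun (is_code^~ r)) //.
by case: i => [[|m] lt_mk] //=; rewrite (level_bit_ffun (is_code^~ l)) // ltnW.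
Qed.

Lemma accepts_code_automaton t : accepts code_automaton t = is_code k t.
Proof. by rewrite /accepts run_code_automaton /= ffunE. Qed.
End CodeAutomaton.

Lemma tree_automatic_of_decoding (S : finType) (B : Type) (P : pred B) (le : B -> B -> Prop)
    (AU : automaton S) (ALE : automaton (option S * option S)) (dec : tree S -> B) :
  (forall t, accepts AU t -> P (dec t)) ->
  (forall x, P x -> exists2 t, accepts AU t & dec t = x) ->
  (forall s t, accepts AU s -> accepts AU t -> dec s = dec t -> s = t) ->
  (forall s t, accepts AU s -> accepts AU t -> accepts ALE (conv s t) <-> le (dec s) (dec t)) ->
  tree_automatic_presentation S (fun x y : {x | P x} => le (sval x) (sval y)).
Proof.
move=> decP dec_surj dec_inj decLE.
have code (x : {x | P x}) : {t | accepts AU t /\ dec t = sval x}.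
  apply: constructive_indefinite_description.
  by have [t At dt] := dec_surj _ (svalP x); exists t.
exists AU, ALE, (fun x => sval (code x)); split.
- move=> x y /(congr1 dec).
  by rewrite (proj2 (svalP (code x))) (proj2 (svalP (code y))); apply: val_inj.
- by move=> x; case: (svalP (code x)).
- move=> t At; exists (exist _ (dec t) (decP t At)).
  have [Ac dc] := svalP (code (exist _ (dec t) (decP t At))).
  exact: dec_inj.
- move=> x y; have [Ax dx] := svalP (code x); have [Ay dy] := svalP (code y).
  by rewrite decLE // dx dy.
Qed.

Theorem lemma3p13 (k : nat) :
  exists S : finType, #|S| = 1 /\
    tree_automatic_presentation S (@ord_le (omega_omega_k k)).
Proof.
exists unit; split; first exact: card_unit.
apply: (@tree_automatic_of_decoding _ _ (below_omega_omega k) (fun x y => cmp x y <> Gt)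
          (code_automaton k) cmp_automaton (decode k)) => [t|x|s t|s t].
- rewrite accepts_code_automaton; exact: below_omega_omega_decode.
- by move=> /decode_surj [t ct <-]; exists t; rewrite ?accepts_code_automaton.
- rewrite !accepts_code_automaton => cs ct dst; apply: tree_cmp_eq.
  by rewrite -(cmp_decode cs ct) dst cmp_refl.
- by rewrite !accepts_code_automaton accepts_cmp_automaton => cs ct; rewrite cmp_decode.
Qed.
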